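(* Let $0<\ell_{\min}\le \ell_{\max}$ and a speedup $s\ge 1$ be given, and let $\gamma$ be the smallest non-negative integer such that $\frac{\gamma\ell_{\min}+\ell_{\max}}{s}\le(\gamma+1)\ell_{\min}$ (for $s>1$, $\gamma=\max\{\lceil \frac{\ell_{\max}-s\ell_{\min}}{(s-1)\ell_{\min}}\rceil,0\}$). If (a) $s<\frac{\ell_{\max}}{\ell_{\min}}$ and (b) $s<\frac{\gamma\ell_{\min}+\ell_{\max}}{\ell_{\max}}$, then no deterministic online algorithm is competitive when run with speedup $s$ against an adversary injecting tasks with costs in $[\ell_{\min},\ell_{\max}]$, even in a system with a single processor.
   Context: Model: $n$ processors with ids $1,\dots,n$ and a shared repository. An adversarial pattern $\mathcal{A}$ is a set of timed events: task injections (each task has a unique id, an arrival time equal to its injection time, and a cost $\ell\in[\ell_{\min},\ell_{\max}]$), processor crashes and processor restarts. A task is pending at time $t$ if it has been injected by time $t$ and no processor has yet reported its completion. A processor works in cycles: it obtains the set of currently pending tasks from the repository (if none, it waits until a task is injected), chooses one, executes it, and reports its completion, after which the task is no longer pending; obtaining and reporting take no time. With speedup $s\ge1$ executing a task of cost $\ell$ takes time $\ell/s$. Execution is non-preemptive and atomic: if the processor crashes before finishing and reporting, no progress is kept. A crashed processor does nothing until restarted; on restart it remembers only the algorithm and $n$, and starts a new cycle. At any time, reports are processed before injections, which are processed before requests for the pending set. Online algorithms are deterministic, do not know $\mathcal{A}$ in advance, and are work conserving (an alive processor never idles while tasks are pending and never abandons a started task). For algorithm ALG, $\mathcal{C}_t(\mathrm{ALG},\mathcal{A})$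 is the total cost and $\mathcal{T}_t(\mathrm{ALG},\mathcal{A})$ the number of pending tasks at time $t$. $\mathcal{C}_t(\mathrm{OPT},\mathcal{A})$ (resp. $\mathcal{T}_t(\mathrm{OPT},\mathcal{A})$) is the minimum (infimum) of that quantity at time $t$ over all offline algorithms knowing $\mathcal{A}$ in advance, with unlimited computational power, running under $\mathcal{A}$ with speedup $1$. ALG is $x$-pending-cost competitive if there is $\Delta$ independent of $\mathcal{A}$ with $\mathcal{C}_t(\mathrm{ALG},\mathcal{A})\le x\,\mathcal{C}_t(\mathrm{OPT},\mathcal{A})+\Delta$ for all $t$ and all $\mathcal{A}$; $x$-pending-task competitive is defined analogously with $\mathcal{T}$. ''Competitive'' means $x$-pending-cost or $x$-pending-task competitive for some finite $x$. *)

From Stdlib Require Import Reals Lra List ClassicalEpsilon.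
Open Scope R_scope.

Record task := Task { tid : nat; arr : R; cost : R }.

(* A crash (pe_crash = true) or restart (pe_crash = false) event of
   processor pe_proc at time pe_time. *)
Record pevent := PEv { pe_crash : bool; pe_proc : nat; pe_time : R }.

Record pattern := Pattern { tasks : list task; pevents : list pevent }.

Definition wf_pattern (lmin lmax : R) (A : pattern) : Prop :=
  NoDup (map tid (tasks A)) /\
  (forall tau, In tau (tasks A) -> 0 <= arr tau /\ lmin <= cost tau <= lmax) /\
  (forall e, In e (pevents A) -> 0 <= pe_time e) /\
  (forall e e', In e (pevents A) -> In e' (pevents A) ->
     pe_proc e = pe_proc e' -> pe_time e = pe_time e' -> e = e').

Definition crash_at (A : pattern) (p : nat) (c : R) : Prop :=
  In (PEv true p c) (pevents A).
Definition restart_at (A : pattern) (p : nat) (r : R) : Prop :=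
  In (PEv false p r) (pevents A).

(* Processor p is alive at time t (after processing the events at time t):
   every crash up to t has been followed by a restart up to t.
   Processors are alive initially. *)
Definition alive (A : pattern) (p : nat) (t : R) : Prop :=
  forall c, crash_at A p c -> c <= t ->
    exists r, restart_at A p r /\ c < r <= t.

(* A schedule: S p tau t  means processor p starts executing task tau at
   time t (begins a cycle by choosing tau). *)
Definition schedule := nat -> task -> R -> Prop.

Definition completed (A : pattern) (S : schedule) (s : R) (tau : task) (t : R)
  : Prop :=
  exists p t0, S p tau t0 /\ t0 + cost tau / s <= t /\
    forall c, crash_at A p c -> ~ (t0 < c /\ c < t0 + cost tau / s).

(* Pending at time t: injected by time t, completion not yet reported
   (reports at time t are processed before requests at time t). *)
Definition pending (A : pattern) (S : schedule) (s : R) (tau : task) (t : R)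
  : Prop :=
  In tau (tasks A) /\ arr tau <= t /\ ~ completed A S s tau t.

Definition pend_cost (A : pattern) (S : schedule) (s t : R) : R :=
  fold_right Rplus 0
    (map (fun tau => if excluded_middle_informative (pending A S s tau t)
                     then cost tau else 0) (tasks A)).

Definition pend_num (A : pattern) (S : schedule) (s t : R) : R :=
  fold_right Rplus 0
    (map (fun tau => if excluded_middle_informative (pending A S s tau t)
                     then 1 else 0) (tasks A)).

(* Feasibility of a schedule for n processors with speedup s under A:
   only processors 1..n work, only when alive, only on pending tasks, and a
   processor starts a new cycle only after finishing the previous task or
   after having crashed in between (execution is atomic, non-preemptive). *)
Definition valid (n : nat) (s : R) (A : pattern) (S : schedule) : Prop :=
  (forall p tau t, S p tau t ->
     (1 <= p <= n)%nat /\ alive A p t /\ pending A S s tau t) /\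
  (forall p tau t tau' t', S p tau t -> S p tau' t' -> t <= t' ->
     (tau = tau' /\ t = t') \/ t + cost tau / s <= t' \/
     exists c, crash_at A p c /\ t < c <= t').

(* Work conservation: an alive processor is never idle while some task is
   pending (it is executing some started, not crashed, task). *)
Definition work_conserving (n : nat) (s : R) (A : pattern) (S : schedule)
  : Prop :=
  forall p t, (1 <= p <= n)%nat -> alive A p t ->
    (exists tau, pending A S s tau t) ->
    exists tau' t0, S p tau' t0 /\ t0 <= t /\ t < t0 + cost tau' / s /\
      forall c, crash_at A p c -> ~ (t0 < c /\ c <= t).

Definition agree_upto (A A' : pattern) (t : R) : Prop :=
  (forall tau, arr tau <= t -> (In tau (tasks A) <-> In tau (tasks A'))) /\
  (forall e, pe_time e <= t -> (In e (pevents A) <-> In e (pevents A'))).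

(* A deterministic online work-conserving algorithm for n processors with
   speedup s, facing tasks of cost in [lmin, lmax]: a map from patterns to
   schedules that is feasible and work conserving on every such pattern,
   and non-anticipating (its decisions up to time t depend only on the
   pattern up to time t). *)
Definition online_alg (n : nat) (s lmin lmax : R)
  (ALG : pattern -> schedule) : Prop :=
  (forall A, wf_pattern lmin lmax A ->
     valid n s A (ALG A) /\ work_conserving n s A (ALG A)) /\
  (forall A A' t, wf_pattern lmin lmax A -> wf_pattern lmin lmax A' ->
     agree_upto A A' t ->
     forall p tau t0, t0 <= t -> (ALG A p tau t0 <-> ALG A' p tau t0)).

(* x-pending-cost competitiveness.  OPT ranges over all offline feasible
   schedules with speedup 1; "<= x * inf_OPT + Delta" is expressed as
   "<= x * C_t(S) + Delta for every such S". *)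
Definition cost_competitive (n : nat) (s lmin lmax : R)
  (ALG : pattern -> schedule) (x : R) : Prop :=
  exists Delta, forall A, wf_pattern lmin lmax A -> forall t (S : schedule),
    valid n 1 A S ->
    pend_cost A (ALG A) s t <= x * pend_cost A S 1 t + Delta.

Definition task_competitive (n : nat) (s lmin lmax : R)
  (ALG : pattern -> schedule) (x : R) : Prop :=
  exists Delta, forall A, wf_pattern lmin lmax A -> forall t (S : schedule),
    valid n 1 A S ->
    pend_num A (ALG A) s t <= x * pend_num A S 1 t + Delta.

Definition competitive (n : nat) (s lmin lmax : R)
  (ALG : pattern -> schedule) : Prop :=
  exists x, cost_competitive n s lmin lmax ALG x \/
            task_competitive n s lmin lmax ALG x.

(* Processors 2..n are crashed at time 0 for good, so only processor 1 matters.
   The adversary plays phases; at the start of each, processor 1 is up and a long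
   task (cost lmax) is pending.  While the algorithm runs short tasks (cost lmin)
   back to back nothing happens.  If it starts a long task at the j-th short slot,
   j < gamma, processor 1 is crashed (j+1) lmin after the phase start, before the
   long task ends by minimality of gamma; an offline schedule meanwhile ran j+1
   short tasks, which are injected anew.  If it runs gamma short tasks instead, the
   crash comes lmax after the phase start, which by condition (b) is before any long
   task it started in the phase ends; the offline schedule ran one long task, which
   is injected anew.

   So the algorithm never completes a long task and completes at most j short tasks
   in a phase injecting j+1, while the offline schedule keeps gamma + 1 tasks
   pending.  After many phases either the long phases or the final run of short
   phases have piled up arbitrarily many pending tasks for the algorithm.
   Condition (a) only serves to make long and short tasks distinct. *)

From Stdlib Require Import Reals Lra Lia List ClassicalEpsilon Classical.
Import ListNotations.
Open Scope R_scope.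

Definition count_where {X : Type} (l : list X) (P : X -> Prop) : R :=
  fold_right Rplus 0 (map (fun x => if excluded_middle_informative (P x) then 1 else 0) l).
Definition cost_where (l : list task) (P : task -> Prop) : R :=
  fold_right Rplus 0 (map (fun τ => if excluded_middle_informative (P τ) then cost τ else 0) l).

Section CountWhere.
Context {X : Type}.
Implicit Types (l : list X) (P Q : X -> Prop).

Lemma count_where_nil P : count_where [] P = 0.
Proof. reflexivity. Qed.

Lemma count_where_cons a l P :
  count_where (a :: l) P = (if excluded_middle_informative (P a) then 1 else 0) + count_where l P.
Proof. reflexivity. Qed.

Lemma count_where_app l1 l2 P : count_where (l1 ++ l2) P = count_where l1 P + count_where l2 P.
Proof.
  induction l1 as [|a l1 IH]; simpl; [rewrite count_where_nil; lra|].
  rewrite !count_where_cons, IH. lra.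
Qed.

Lemma count_where_ge0 l P : 0 <= count_where l P.
Proof.
  induction l; [rewrite count_where_nil; lra|].
  rewrite count_where_cons. destruct excluded_middle_informative; lra.
Qed.

Lemma count_where_mono l P Q : (forall x, In x l -> P x -> Q x) ->
  count_where l P <= count_where l Q.
Proof.
  induction l as [|a l IH]; intros H; [rewrite !count_where_nil; lra|]. rewrite !count_where_cons.
  specialize (IH (fun x Hx => H x (or_intror Hx))).
  destruct (excluded_middle_informative (P a)) as [HPa|];
    destruct (excluded_middle_informative (Q a)) as [|HnQa]; try lra.
  exfalso. apply HnQa, H; simpl; auto.
Qed.

Lemma count_where_all l P : (forall x, In x l -> P x) -> count_where l P = INR (length l).
Proof.
  induction l as [|a l IH]; intros H; [reflexivity|].
  rewrite count_where_cons, IH by (intros; apply H; simpl; auto). cbn [length]. rewrite S_INR.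
  destruct excluded_middle_informative as [|HnPa]; [lra|]. exfalso. apply HnPa, H. simpl; auto.
Qed.

Lemma count_where_none l P : (forall x, In x l -> ~ P x) -> count_where l P = 0.
Proof.
  induction l as [|a l IH]; intros H; [reflexivity|].
  rewrite count_where_cons, IH by (intros; apply H; simpl; auto).
  destruct excluded_middle_informative as [Ha|]; [|lra]. exfalso.
  exact (H a (or_introl eq_refl) Ha).
Qed.

Lemma count_where_split l P Q1 Q2 : (forall x, In x l -> P x -> Q1 x \/ Q2 x) ->
  count_where l P <= count_where l Q1 + count_where l Q2.
Proof.
  induction l as [|a l IH]; intros H; [rewrite !count_where_nil; lra|]. rewrite !count_where_cons.
  specialize (IH (fun x Hx => H x (or_intror Hx))).
  pose proof (count_where_ge0 l Q1). pose proof (count_where_ge0 l Q2).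
  destruct (excluded_middle_informative (P a)) as [Ha|];
    destruct (excluded_middle_informative (Q1 a));
    destruct (excluded_middle_informative (Q2 a)); try lra.
  exfalso. destruct (H a (or_introl eq_refl) Ha); auto.
Qed.

Lemma count_where_compl l P : count_where l P + count_where l (fun x => ~ P x) = INR (length l).
Proof.
  induction l as [|a l IH]; [rewrite !count_where_nil; simpl; lra|].
  rewrite !count_where_cons. cbn [length]. rewrite S_INR.
  destruct (excluded_middle_informative (P a)); destruct (excluded_middle_informative (~ P a));
    try tauto; lra.
Qed.

Lemma count_where_le1 l P : NoDup l ->
  (forall x y, In x l -> In y l -> P x -> P y -> x = y) -> count_where l P <= 1.
Proof.
  induction l as [|a l IH]; intros ND H; [rewrite count_where_nil; lra|]. rewrite count_where_cons.
  inversion ND as [|? ? Ha ND']; subst.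
  destruct (excluded_middle_informative (P a)) as [HPa|].
  - rewrite count_where_none; [lra|]. intros x Hx HPx.
    assert (x = a) by (apply H; simpl; auto). subst. auto.
  - pose proof (IH ND' (fun x y Hx Hy => H x y (or_intror Hx) (or_intror Hy))). lra.
Qed.

Lemma count_where_cover {K : Type} (keys : list K) (rel : K -> X -> Prop) l P : NoDup l ->
  (forall x, In x l -> P x -> exists k, In k keys /\ rel k x) ->
  (forall k x y, In x l -> In y l -> rel k x -> rel k y -> x = y) ->
  count_where l P <= INR (length keys).
Proof.
  revert P. induction keys as [|k keys IH]; intros P ND Hc Hu.
  - rewrite count_where_none; [simpl; lra|]. intros x Hx Hp. destruct (Hc x Hx Hp) as [k [[] _]].
  - cbn [length]. rewrite S_INR.
    assert (Hrest : count_where l (fun x => P x /\ ~ rel k x) <= INR (length keys)).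
    { apply IH; auto. intros x Hx [Hp Hr]. destruct (Hc x Hx Hp) as [k' [[<-|Hk'] Hr']].
      - contradiction.
      - eauto. }
    assert (Hk : count_where l (rel k) <= 1).
    { apply count_where_le1; auto. intros x y Hx Hy. apply Hu; auto. }
    assert (Hsplit :
      count_where l P <= count_where l (fun x => P x /\ ~ rel k x) + count_where l (rel k)).
    { apply count_where_split. intros x _ Hp. destruct (classic (rel k x)); auto. }
    lra.
Qed.

End CountWhere.

Lemma cost_where_cons a l P :
  cost_where (a :: l) P =
    (if excluded_middle_informative (P a) then cost a else 0) + cost_where l P.
Proof. reflexivity. Qed.

Lemma cost_where_ge l P c : (forall τ, In τ l -> c <= cost τ) ->
  c * count_where l P <= cost_where l P.
Proof.
  induction l as [|a l IH]; intros H; [unfold count_where, cost_where; simpl; lra|].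
  rewrite count_where_cons, cost_where_cons.
  specialize (IH (fun τ Hτ => H τ (or_intror Hτ))). pose proof (H a (or_introl eq_refl)).
  destruct excluded_middle_informative; nra.
Qed.

Lemma cost_where_le l P c : (forall τ, In τ l -> cost τ <= c) ->
  cost_where l P <= c * count_where l P.
Proof.
  induction l as [|a l IH]; intros H; [unfold count_where, cost_where; simpl; lra|].
  rewrite count_where_cons, cost_where_cons.
  specialize (IH (fun τ Hτ => H τ (or_intror Hτ))). pose proof (H a (or_introl eq_refl)).
  destruct excluded_middle_informative; nra.
Qed.

Lemma pend_num_ge0 A Sd s t : 0 <= pend_num A Sd s t.
Proof. apply count_where_ge0. Qed.

Lemma pend_cost_bounds lmin lmax A Sd s t : wf_pattern lmin lmax A ->
  lmin * pend_num A Sd s t <= pend_cost A Sd s t <= lmax * pend_num A Sd s t.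
Proof.
  intros [_ [Hcost _]]. split.
  - apply cost_where_ge. intros τ Hτ. apply (Hcost τ Hτ).
  - apply cost_where_le. intros τ Hτ. apply (Hcost τ Hτ).
Qed.

Lemma not_competitive_of_unbounded n s lmin lmax ALG C : 0 < lmin <= lmax ->
  (forall B, exists A Sd t, wf_pattern lmin lmax A /\ valid n 1 A Sd /\
     pend_num A Sd 1 t <= C /\ B < pend_num A (ALG A) s t) ->
  ~ competitive n s lmin lmax ALG.
Proof.
  intros Hl Hunb [x [[D HD]|[D HD]]].
  - destruct (Hunb ((Rabs x * lmax * Rabs C + Rabs D) / lmin))
      as [A [Sd [t [Hwf [Hv [Hopt Halg]]]]]].
    specialize (HD A Hwf t Sd Hv).
    pose proof (pend_cost_bounds _ _ A (ALG A) s t Hwf) as [Ha _].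
    pose proof (pend_cost_bounds _ _ A Sd 1 t Hwf) as [Hb1 Hb2].
    pose proof (pend_num_ge0 A Sd 1 t) as Hb0.
    pose proof (Rabs_pos x). pose proof (Rle_abs x). pose proof (Rle_abs D). pose proof (Rle_abs C).
    assert (Hc0 : 0 <= pend_cost A Sd 1 t) by nra.
    assert (Hb : pend_cost A Sd 1 t <= lmax * Rabs C).
    { apply (Rle_trans _ _ _ Hb2). apply Rmult_le_compat_l; lra. }
    assert (Hxb : x * pend_cost A Sd 1 t <= Rabs x * (lmax * Rabs C)).
    { apply (Rle_trans _ (Rabs x * pend_cost A Sd 1 t)); [apply Rmult_le_compat_r; lra|].
      apply Rmult_le_compat_l; lra. }
    apply (Rmult_lt_compat_l lmin) in Halg; [|lra].
    replace (lmin * ((Rabs x * lmax * Rabs C + Rabs D) / lmin))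
      with (Rabs x * lmax * Rabs C + Rabs D) in Halg by (field; lra).
    lra.
  - destruct (Hunb (Rabs x * Rabs C + Rabs D)) as [A [Sd [t [Hwf [Hv [Hopt Halg]]]]]].
    specialize (HD A Hwf t Sd Hv).
    pose proof (pend_num_ge0 A Sd 1 t) as Hb0.
    pose proof (Rabs_pos x). pose proof (Rle_abs x). pose proof (Rle_abs D). pose proof (Rle_abs C).
    assert (x * pend_num A Sd 1 t <= Rabs x * Rabs C) by nra.
    lra.
Qed.

Lemma NoDup_map_inj_on {A B : Type} (f : A -> B) l x y : NoDup (map f l) ->
  In x l -> In y l -> f x = f y -> x = y.
Proof.
  induction l as [|a l IH]; simpl; intros ND Hx Hy E; [destruct Hx|].
  inversion ND as [|? ? Ha ND']; subst.
  destruct Hx as [<-|Hx]; destruct Hy as [<-|Hy]; auto.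
  - exfalso. apply Ha. rewrite E. apply in_map. exact Hy.
  - exfalso. apply Ha. rewrite <- E. apply in_map. exact Hx.
Qed.

Lemma find_seq_first (f : nat -> bool) a k j : find f (seq a k) = Some j ->
  (a <= j < a + k)%nat /\ f j = true /\ (forall i, (a <= i < j)%nat -> f i = false).
Proof.
  revert a; induction k as [|k IH]; intros a; cbn [seq find]; [discriminate|].
  destruct (f a) eqn:Fa.
  - intros [= <-]. repeat split; auto; lia.
  - intros Hf. destruct (IH (S a) Hf) as [Hj [Hfj Hmin]]. repeat split; auto; [lia|lia|].
    intros i Hi. destruct (Nat.eq_dec i a) as [->|]; auto. apply Hmin. lia.
Qed.

Section Adversary.
Variables lmin lmax s : R.
Variables gamma n : nat.
Hypothesis Hlmin : 0 < lmin.
Hypothesis Hlt : lmin < lmax.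
Hypothesis Hs : 1 <= s.
Hypothesis Hn : (1 <= n)%nat.
Hypothesis Hbelow_gamma : forall j, (j < gamma)%nat ->
  (INR j + 1) * lmin < (INR j * lmin + lmax) / s.
Hypothesis Hcond_b : lmax < (INR gamma * lmin + lmax) / s.

(* The adversary's history [hr] lists the outcomes of the phases played so far,
   most recent first; short tasks have even ids, long ones odd ids.  The phase with
   outcome [d] starting at [w] ends with a crash of processor 1 at
   [w + phase_len d]; it restarts, and the new tasks arrive, one time unit later. *)
Definition short_task (m : nat) (a : R) := Task (2*m)%nat a lmin.
Definition long_task (m : nat) (a : R) := Task (2*m+1)%nat a lmax.
Definition phase_len (d : option nat) : R :=
  match d with Some j => (INR j + 1) * lmin | None => lmax end.
Fixpoint phase_start (hr : list (option nat)) : R :=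
  match hr with [] => 0 | d :: hr' => phase_start hr' + phase_len d + 1 end.
Fixpoint nshort (hr : list (option nat)) : nat :=
  match hr with
  | [] => 0%nat
  | Some j :: hr' => (nshort hr' + S j)%nat
  | None :: hr' => nshort hr'
  end.
Fixpoint nlong (hr : list (option nat)) : nat :=
  match hr with
  | [] => 0%nat
  | Some _ :: hr' => nlong hr'
  | None :: hr' => S (nlong hr')
  end.
Definition injected (d : option nat) (hr : list (option nat)) : list task :=
  match d with
  | Some j => map (fun m => short_task m (phase_start (d :: hr))) (seq (nshort hr + gamma) (S j))
  | None => [long_task (S (nlong hr)) (phase_start (d :: hr))]
  end.
Fixpoint adv_tasks (hr : list (option nat)) : list task :=
  match hr with
  | [] => map (fun m => short_task m 0) (seq 0 gamma) ++ [long_task 0 0]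
  | d :: hr' => adv_tasks hr' ++ injected d hr'
  end.
Fixpoint adv_events (hr : list (option nat)) : list pevent :=
  match hr with
  | [] => map (fun p => PEv true p 0) (seq 2 (n-1))
  | d :: hr' => adv_events hr' ++
      [PEv true 1 (phase_start hr' + phase_len d); PEv false 1 (phase_start (d :: hr'))]
  end.
Definition adv hr := Pattern (adv_tasks hr) (adv_events hr).

Lemma pend_num_adv hr Sd s' t :
  pend_num (adv hr) Sd s' t = count_where (adv_tasks hr) (fun τ => pending (adv hr) Sd s' τ t).
Proof. reflexivity. Qed.

Lemma phase_len_pos d : 0 < phase_len d.
Proof. destruct d as [j|]; simpl; [|lra]. pose proof (pos_INR j). nra. Qed.

Lemma phase_start_ge0 hr : 0 <= phase_start hr.
Proof. induction hr; simpl; [lra|]. pose proof (phase_len_pos a). lra. Qed.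

Lemma phase_start_app hr1 hr2 : phase_start hr2 <= phase_start (hr1 ++ hr2).
Proof. induction hr1; simpl; [lra|]. pose proof (phase_len_pos a). lra. Qed.

Lemma adv_tasks_arr hr τ : In τ (adv_tasks hr) -> 0 <= arr τ <= phase_start hr.
Proof.
  induction hr as [|d hr IH]; simpl; intros Hin.
  - apply in_app_or in Hin. destruct Hin as [Hin|Hin].
    + apply in_map_iff in Hin. destruct Hin as [m [<- _]]. simpl. lra.
    + destruct Hin as [<-|[]]. simpl. lra.
  - pose proof (phase_start_ge0 hr). pose proof (phase_len_pos d).
    apply in_app_or in Hin. destruct Hin as [Hin|Hin].
    + specialize (IH Hin). lra.
    + destruct d; cbn [injected] in Hin.
      * apply in_map_iff in Hin. destruct Hin as [m [<- _]]. simpl in *. lra.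
      * destruct Hin as [<-|[]]. simpl in *. lra.
Qed.

Lemma adv_tasks_kind hr τ : In τ (adv_tasks hr) ->
  (exists m, tid τ = (2*m)%nat /\ cost τ = lmin /\ (m < nshort hr + gamma)%nat) \/
  (exists m, tid τ = (2*m+1)%nat /\ cost τ = lmax /\ (m <= nlong hr)%nat).
Proof.
  induction hr as [|d hr IH]; simpl; intros Hin.
  - apply in_app_or in Hin. destruct Hin as [Hin|Hin].
    + apply in_map_iff in Hin. destruct Hin as [m [<- Hm]]. apply in_seq in Hm.
      left. exists m. simpl. repeat split; lia.
    + destruct Hin as [<-|[]]. right. exists 0%nat. simpl. repeat split; lia.
  - apply in_app_or in Hin. destruct Hin as [Hin|Hin].
    + destruct (IH Hin) as [[m [H1 [H2 H3]]]|[m [H1 [H2 H3]]]].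
      * left. exists m. repeat split; auto. destruct d; simpl; lia.
      * right. exists m. repeat split; auto. destruct d; simpl; lia.
    + destruct d; cbn [injected] in Hin.
      * apply in_map_iff in Hin. destruct Hin as [m [<- Hm]]. apply in_seq in Hm.
        left. exists m. simpl. repeat split; lia.
      * destruct Hin as [<-|[]]. right. exists (S (nlong hr)). simpl. repeat split; lia.
Qed.

Lemma adv_tasks_cost hr τ : In τ (adv_tasks hr) -> cost τ = lmin \/ cost τ = lmax.
Proof. intros H. destruct (adv_tasks_kind hr τ H) as [[m [_ [H2 _]]]|[m [_ [H2 _]]]]; auto. Qed.

Lemma adv_tasks_NoDup hr : NoDup (map tid (adv_tasks hr)).
Proof.
  induction hr as [|d hr IH]; simpl.
  - rewrite map_app. apply NoDup_app.
    + rewrite map_map. simpl. apply NoDup_map_NoDup_ForallPairs.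
      * intros x y _ _ H. lia.
      * apply seq_NoDup.
    + constructor; [intros []|constructor].
    + intros a Ha Hb. destruct Hb as [<-|[]]. apply in_map_iff in Ha.
      destruct Ha as [x [Hx Hin]]. apply in_map_iff in Hin. destruct Hin as [m [<- _]].
      simpl in Hx. lia.
  - rewrite map_app. apply NoDup_app; auto.
    + destruct d; cbn [injected].
      * rewrite map_map. cbn [tid short_task]. apply NoDup_map_NoDup_ForallPairs.
        -- intros x y _ _ H. lia.
        -- apply seq_NoDup.
      * constructor; [intros []|constructor].
    + intros a Ha Hb. apply in_map_iff in Ha. destruct Ha as [τ [<- Hτ]].
      destruct (adv_tasks_kind hr τ Hτ) as [[m [H1 [_ H3]]]|[m [H1 [_ H3]]]];
      destruct d; cbn [injected] in Hb.
      * rewrite map_map in Hb. apply in_map_iff in Hb. destruct Hb as [m' [Hm' Hin]].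
        apply in_seq in Hin. simpl in Hm'. lia.
      * destruct Hb as [Hb|[]]. simpl in Hb. lia.
      * rewrite map_map in Hb. apply in_map_iff in Hb. destruct Hb as [m' [Hm' Hin]].
        simpl in Hm'. lia.
      * destruct Hb as [Hb|[]]. simpl in Hb. lia.
Qed.

Lemma adv_tasks_tid_inj hr τ τ' : In τ (adv_tasks hr) -> In τ' (adv_tasks hr) ->
  tid τ = tid τ' -> τ = τ'.
Proof. apply NoDup_map_inj_on, adv_tasks_NoDup. Qed.

Lemma adv_tasks_app hr1 hr2 τ : In τ (adv_tasks hr2) -> In τ (adv_tasks (hr1 ++ hr2)).
Proof. induction hr1; simpl; intros; auto. apply in_or_app. left. auto. Qed.

Lemma adv_tasks_app_inv hr1 hr2 τ : In τ (adv_tasks (hr1 ++ hr2)) ->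
  In τ (adv_tasks hr2) \/ phase_start hr2 < arr τ.
Proof.
  induction hr1 as [|d hr1 IH]; simpl; intros Hin; auto.
  apply in_app_or in Hin. destruct Hin as [Hin|Hin]; auto.
  right. pose proof (phase_start_app hr1 hr2). pose proof (phase_len_pos d).
  destruct d; cbn [injected] in Hin.
  - apply in_map_iff in Hin. destruct Hin as [m [<- _]]. simpl in *. lra.
  - destruct Hin as [<-|[]]. simpl in *. lra.
Qed.

Lemma adv_tasks_short hr m : (m < nshort hr + gamma)%nat ->
  exists τ, In τ (adv_tasks hr) /\ tid τ = (2*m)%nat.
Proof.
  induction hr as [|d hr IH]; simpl; intros Hm.
  - exists (short_task m 0). split; auto. apply in_or_app. left.
    apply in_map_iff; eexists; split; [reflexivity|apply in_seq; lia].
  - destruct d as [j|].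
    + destruct (Nat.lt_ge_cases m (nshort hr + gamma)) as [Hl|Hl].
      * destruct (IH Hl) as [τ [H1 H2]]. exists τ. split; auto. apply in_or_app; auto.
      * exists (short_task m (phase_start (Some j :: hr))). split; auto. apply in_or_app. right.
        cbn [injected]. apply in_map_iff; eexists; split; [reflexivity|apply in_seq; lia].
    + destruct (IH Hm) as [τ [H1 H2]]. exists τ. split; auto. apply in_or_app; auto.
Qed.

Lemma adv_tasks_long hr m : (m <= nlong hr)%nat ->
  exists τ, In τ (adv_tasks hr) /\ tid τ = (2*m+1)%nat.
Proof.
  induction hr as [|d hr IH]; simpl; intros Hm.
  - exists (long_task 0 0). split; [|simpl; lia]. apply in_or_app. right. left.
    replace m with 0%nat by lia. auto.
  - destruct d as [j|].
    + destruct (IH Hm) as [τ [H1 H2]]. exists τ. split; auto. apply in_or_app; auto.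
    + destruct (Nat.le_gt_cases m (nlong hr)) as [Hl|Hl].
      * destruct (IH Hl) as [τ [H1 H2]]. exists τ. split; auto. apply in_or_app; auto.
      * exists (long_task m (phase_start (None :: hr))). split; auto. apply in_or_app. right.
        simpl. left. f_equal. lia.
Qed.

Lemma adv_events_time hr e : In e (adv_events hr) -> 0 <= pe_time e <= phase_start hr.
Proof.
  induction hr as [|d hr IH]; simpl; intros Hin.
  - apply in_map_iff in Hin. destruct Hin as [p [<- _]]. simpl. lra.
  - pose proof (phase_start_ge0 hr). pose proof (phase_len_pos d).
    apply in_app_or in Hin. destruct Hin as [Hin|Hin].
    + specialize (IH Hin). lra.
    + destruct Hin as [<-|[<-|[]]]; simpl; lra.
Qed.

Lemma adv_events_app hr1 hr2 e : In e (adv_events hr2) -> In e (adv_events (hr1 ++ hr2)).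
Proof. induction hr1; simpl; intros; auto. apply in_or_app. left. auto. Qed.

Lemma adv_events_app_inv hr1 hr2 e : In e (adv_events (hr1 ++ hr2)) ->
  In e (adv_events hr2) \/ phase_start hr2 < pe_time e.
Proof.
  induction hr1 as [|d hr1 IH]; simpl; intros Hin; auto.
  apply in_app_or in Hin. destruct Hin as [Hin|Hin]; auto.
  right. pose proof (phase_start_app hr1 hr2). pose proof (phase_len_pos d).
  destruct Hin as [<-|[<-|[]]]; simpl; lra.
Qed.

Lemma adv_events_unique hr e e' : In e (adv_events hr) -> In e' (adv_events hr) ->
  pe_proc e = pe_proc e' -> pe_time e = pe_time e' -> e = e'.
Proof.
  induction hr as [|d hr IH]; simpl; intros H1 H2 Hp Ht.
  - apply in_map_iff in H1. destruct H1 as [p [<- _]].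
    apply in_map_iff in H2. destruct H2 as [p' [<- _]]. simpl in Hp. subst. auto.
  - pose proof (phase_len_pos d).
    apply in_app_or in H1. apply in_app_or in H2.
    destruct H1 as [H1|H1]; destruct H2 as [H2|H2]; auto.
    + pose proof (adv_events_time hr e H1). destruct H2 as [<-|[<-|[]]]; simpl in Ht; lra.
    + pose proof (adv_events_time hr e' H2). destruct H1 as [<-|[<-|[]]]; simpl in Ht; lra.
    + destruct H1 as [<-|[<-|[]]]; destruct H2 as [<-|[<-|[]]]; simpl in Ht; auto; lra.
Qed.

Lemma adv_wf hr : wf_pattern lmin lmax (adv hr).
Proof.
  split; [|split; [|split]]; simpl.
  - apply adv_tasks_NoDup.
  - intros τ Hτ. pose proof (adv_tasks_arr hr τ Hτ).
    destruct (adv_tasks_cost hr τ Hτ) as [->| ->]; lra.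
  - intros e He. apply (adv_events_time hr e He).
  - intros e e' H1 H2 H3 H4. apply (adv_events_unique hr e e'); auto.
Qed.

Lemma adv_events_nil e : In e (adv_events []) ->
  pe_crash e = true /\ pe_time e = 0 /\ (2 <= pe_proc e <= n)%nat.
Proof.
  simpl. intros H. apply in_map_iff in H. destruct H as [p [<- Hp]]. apply in_seq in Hp.
  simpl. repeat split; lia.
Qed.

Lemma restart_proc1 hr p r : restart_at (adv hr) p r -> p = 1%nat.
Proof.
  unfold restart_at. simpl. induction hr as [|d hr IH]; simpl; intros H.
  - apply adv_events_nil in H. simpl in H. destruct H as [H _]. discriminate.
  - apply in_app_or in H. destruct H as [H|[H|[H|[]]]]; auto; inversion H; auto.
Qed.

Lemma crash_idle hr p : (2 <= p <= n)%nat -> crash_at (adv hr) p 0.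
Proof.
  intros Hp. unfold crash_at. simpl. rewrite <- (app_nil_r hr). apply (adv_events_app hr []). simpl.
  apply in_map_iff. exists p. split; auto. apply in_seq. lia.
Qed.

Lemma idle_not_alive hr p t : (2 <= p <= n)%nat -> 0 <= t -> ~ alive (adv hr) p t.
Proof.
  intros Hp Ht Ha. destruct (Ha 0 (crash_idle hr p Hp) Ht) as [r [Hr _]].
  apply restart_proc1 in Hr. lia.
Qed.

Lemma alive_after hr t : phase_start hr <= t -> alive (adv hr) 1 t.
Proof.
  revert t; induction hr as [|d hr IH]; intros t Ht c Hc Hct; unfold crash_at in Hc; simpl in Hc.
  - apply adv_events_nil in Hc. simpl in Hc. lia.
  - pose proof (phase_len_pos d). pose proof (phase_start_ge0 hr).
    apply in_app_or in Hc. destruct Hc as [Hc|[Hc|[Hc|[]]]].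
    + pose proof (adv_events_time hr _ Hc) as Ht'. simpl in Ht'.
      assert (Hw : phase_start hr <= phase_start hr) by lra.
      destruct (IH (phase_start hr) Hw c Hc ltac:(lra)) as [r [Hr1 Hr2]].
      exists r. split; [|simpl in Ht; lra].
      unfold restart_at in *. simpl. apply in_or_app. left. auto.
    + inversion Hc; subst. exists (phase_start (d :: hr)). split.
      * unfold restart_at. simpl. apply in_or_app. right. right. left. auto.
      * simpl in *. lra.
    + discriminate.
Qed.

Lemma alive_before_in_window hr t : alive (adv hr) 1 t -> 0 <= t -> t < phase_start hr ->
  exists hr1 d hr2, hr = hr1 ++ d :: hr2 /\ phase_start hr2 <= t /\
    t < phase_start hr2 + phase_len d.
Proof.
  induction hr as [|d hr IH]; intros Ha Ht0 Ht.
  - simpl in Ht. lra.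
  - destruct (Rlt_le_dec t (phase_start hr)) as [Hl|Hl].
    + assert (Ha' : alive (adv hr) 1 t).
      { intros c Hc Hct. assert (Hc' : crash_at (adv (d :: hr)) 1 c).
        { unfold crash_at in *. simpl. apply in_or_app. left. auto. }
        destruct (Ha c Hc' Hct) as [r [Hr1 Hr2]]. exists r. split; auto.
        unfold restart_at in Hr1. simpl in Hr1. apply in_app_or in Hr1.
        destruct Hr1 as [Hr1|[Hr1|[Hr1|[]]]]; auto; inversion Hr1; subst.
        simpl in Hr2. pose proof (phase_len_pos d). lra. }
      destruct (IH Ha' Ht0 Hl) as [hr1 [d' [hr2 [E [H1 H2]]]]].
      exists (d :: hr1), d', hr2. rewrite E. auto.
    + destruct (Rlt_le_dec t (phase_start hr + phase_len d)) as [Hl2|Hl2].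
      * exists [], d, hr. auto.
      * exfalso. assert (Hc : crash_at (adv (d :: hr)) 1 (phase_start hr + phase_len d)).
        { unfold crash_at. simpl. apply in_or_app. right. left. auto. }
        destruct (Ha _ Hc Hl2) as [r [Hr1 Hr2]].
        unfold restart_at in Hr1. simpl in Hr1. apply in_app_or in Hr1.
        destruct Hr1 as [Hr1|[Hr1|[Hr1|[]]]].
        -- pose proof (adv_events_time hr _ Hr1). simpl in *. pose proof (phase_len_pos d). lra.
        -- discriminate.
        -- inversion Hr1; subst. simpl in Ht. lra.
Qed.

Lemma crash_window_end hr1 d hr2 :
  crash_at (adv (hr1 ++ d :: hr2)) 1 (phase_start hr2 + phase_len d).
Proof.
  unfold crash_at. simpl. apply (adv_events_app hr1 (d :: hr2)). simpl.
  apply in_or_app. right. left. auto.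
Qed.

Lemma crash_cases hr1 d hr2 c : crash_at (adv (hr1 ++ d :: hr2)) 1 c ->
  In (PEv true 1 c) (adv_events hr2) \/ c = phase_start hr2 + phase_len d \/
    phase_start (d :: hr2) < c.
Proof.
  unfold crash_at. simpl. intros H. apply adv_events_app_inv in H. destruct H as [H|H]; auto.
  simpl in H. apply in_app_or in H. destruct H as [H|[H|[H|[]]]]; auto.
  - inversion H; auto.
  - discriminate.
Qed.

Lemma crash_cases_time hr1 d hr2 c : crash_at (adv (hr1 ++ d :: hr2)) 1 c ->
  c <= phase_start hr2 \/ c = phase_start hr2 + phase_len d \/ phase_start (d :: hr2) < c.
Proof.
  intros H. destruct (crash_cases hr1 d hr2 c H) as [H1|H1]; auto.
  left. apply (adv_events_time hr2 _ H1).
Qed.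

Lemma alive_in_window hr1 d hr2 t : phase_start hr2 <= t -> t < phase_start hr2 + phase_len d ->
  alive (adv (hr1 ++ d :: hr2)) 1 t.
Proof.
  intros H1 H2 c Hc Hct. destruct (crash_cases hr1 d hr2 c Hc) as [Hc'|[Hc'|Hc']].
  - pose proof (adv_events_time hr2 _ Hc') as Hcw. simpl in Hcw.
    assert (Hw : phase_start hr2 <= phase_start hr2) by lra.
    destruct (alive_after hr2 (phase_start hr2) Hw c Hc' ltac:(lra)) as [r [Hr1 Hr2]].
    exists r. split; [|lra]. unfold restart_at in *. simpl in *.
    replace (hr1 ++ d :: hr2) with ((hr1 ++ [d]) ++ hr2) by (rewrite <- app_assoc; auto).
    apply adv_events_app. auto.
  - lra.
  - simpl in Hc'. pose proof (phase_len_pos d). lra.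
Qed.

Lemma adv_agree_prefix hr1 d hr2 t : t < phase_start hr2 + phase_len d ->
  agree_upto (adv hr2) (adv (hr1 ++ d :: hr2)) t.
Proof.
  intros Ht. split; simpl.
  - intros τ Hτ. split; intros H.
    + apply adv_tasks_app with (hr1 := hr1 ++ [d]) in H. rewrite <- app_assoc in H. auto.
    + apply adv_tasks_app_inv in H. destruct H as [H|H]; [|simpl in H; lra].
      simpl in H. apply in_app_or in H. destruct H as [H|H]; auto.
      exfalso. destruct d; cbn [injected] in H.
      * apply in_map_iff in H. destruct H as [m [<- _]]. simpl in *. lra.
      * destruct H as [<-|[]]. simpl in *. lra.
  - intros e He. split; intros H.
    + apply adv_events_app with (hr1 := hr1 ++ [d]) in H. rewrite <- app_assoc in H. auto.
    + apply adv_events_app_inv in H. destruct H as [H|H]; [|simpl in H; lra].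
      simpl in H. apply in_app_or in H. destruct H as [H|[H|[H|[]]]]; auto;
      subst; simpl in *; lra.
Qed.

Lemma crash_before hr c : crash_at (adv hr) 1 c -> c < phase_start hr.
Proof.
  unfold crash_at. simpl. induction hr as [|d hr IH]; simpl; intros H.
  - apply adv_events_nil in H. simpl in H. lia.
  - pose proof (phase_len_pos d). apply in_app_or in H. destruct H as [H|[H|[H|[]]]].
    + specialize (IH H). lra.
    + inversion H. lra.
    + discriminate.
Qed.

Lemma adv_tasks_odd hr τ m : In τ (adv_tasks hr) -> tid τ = (2*m+1)%nat -> cost τ = lmax.
Proof.
  intros H1 H2. destruct (adv_tasks_kind hr τ H1) as [[m' [E [_ _]]]|[m' [_ [C _]]]]; auto. lia.
Qed.

Lemma adv_tasks_even hr τ m : In τ (adv_tasks hr) -> tid τ = (2*m)%nat ->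
  cost τ = lmin /\ (m < nshort hr + gamma)%nat.
Proof.
  intros H1 H2. destruct (adv_tasks_kind hr τ H1) as [[m' [E [C L]]]|[m' [E _]]]; [|lia].
  assert (m = m') by lia. subst. auto.
Qed.

(* [slot w i]: start of the [i]-th short task when short tasks are run back to
   back from time [w]. *)
Definition slot (w : R) (i : nat) := w + INR i * lmin / s.
Definition long_at (Sd : schedule) w i := exists τ, cost τ = lmax /\ Sd 1%nat τ (slot w i).

(* The adversary's reading of the phase: [Some j] if the algorithm runs short tasks
   at slots [0 .. j-1] and then a long one at slot [j < gamma], [None] otherwise. *)
Definition decide (Sd : schedule) w :=
  find (fun i => if excluded_middle_informative (long_at Sd w i) then true else false)
    (seq 0 gamma).

Definition phase_spec (d : option nat) (Sd : schedule) (w : R) : Prop :=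
  match d with
  | Some j => forall τ t0, w <= t0 -> t0 < w + (INR j + 1) * lmin -> Sd 1%nat τ t0 ->
      (exists i, (i < j)%nat /\ t0 = slot w i /\ cost τ = lmin) \/
      (t0 = slot w j /\ cost τ = lmax)
  | None => forall τ t0, w <= t0 -> t0 < w + lmax -> Sd 1%nat τ t0 ->
      (exists i, (i < gamma)%nat /\ t0 = slot w i /\ cost τ = lmin) \/ slot w gamma <= t0
  end.

Lemma decide_some Sd w j : decide Sd w = Some j ->
  (j < gamma)%nat /\ long_at Sd w j /\ forall i, (i < j)%nat -> ~ long_at Sd w i.
Proof.
  unfold decide. intros E. apply find_seq_first in E. destruct E as [Hj [Hf Hmin]].
  destruct excluded_middle_informative as [Hl|]; [|discriminate].
  repeat split; [lia|exact Hl|]. intros i Hi HL. specialize (Hmin i ltac:(lia)).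
  destruct excluded_middle_informative; [discriminate|contradiction].
Qed.

Lemma decide_none Sd w : decide Sd w = None -> forall i, (i < gamma)%nat -> ~ long_at Sd w i.
Proof.
  unfold decide. intros E i Hi HL.
  assert (Hf := find_none _ _ E i ltac:(apply in_seq; lia)). cbv beta in Hf.
  destruct excluded_middle_informative; [discriminate|contradiction].
Qed.

Lemma slot_succ w i : slot w (S i) = slot w i + lmin / s.
Proof. unfold slot. rewrite S_INR. field. lra. Qed.

Lemma short_time_pos : 0 < lmin / s.
Proof. apply Rdiv_lt_0_compat; lra. Qed.

Lemma slot_lt w i i' : (i < i')%nat -> slot w i + lmin / s <= slot w i'.
Proof.
  intros H. rewrite <- slot_succ. unfold slot. apply Rplus_le_compat_l.
  unfold Rdiv. apply Rmult_le_compat_r; [left; apply Rinv_0_lt_compat; lra|].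
  apply Rmult_le_compat_r; [lra|]. apply le_INR. lia.
Qed.

Lemma slot_ge w i : w <= slot w i.
Proof.
  unfold slot. pose proof (pos_INR i). assert (0 <= INR i * lmin / s).
  { unfold Rdiv. apply Rmult_le_pos; [nra|left; apply Rinv_0_lt_compat; lra]. }
  lra.
Qed.

(* The two choices of the crash time: a long task started at slot [j < gamma] is still
   running at [w + (j+1) lmin], and so is one started after the [gamma] short slots at
   [w + lmax].  These are exactly the minimality of [gamma] and condition (b). *)
Lemma long_at_slot_outlives w j : (j < gamma)%nat ->
  w + (INR j + 1) * lmin < slot w j + lmax / s.
Proof.
  intros Hj. specialize (Hbelow_gamma j Hj). unfold slot.
  replace (w + INR j * lmin / s + lmax / s) with (w + (INR j * lmin + lmax) / s) by (field; lra).
  lra.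
Qed.

Lemma long_after_slots_outlives w t : slot w gamma <= t -> w + lmax < t + lmax / s.
Proof.
  intros Ht. unfold slot in Ht.
  assert (w + lmax < w + INR gamma * lmin / s + lmax / s).
  { replace (w + INR gamma * lmin / s + lmax / s) with (w + (INR gamma * lmin + lmax) / s)
      by (field; lra).
    lra. }
  lra.
Qed.

Section OnePhase.
Variable P : pattern.
Variable Sd : schedule.
Variable w : R.
Hypothesis Hv : valid n s P Sd.
Hypothesis Hwc : work_conserving n s P Sd.
Hypothesis Halive : forall t, w <= t -> alive P 1 t.
Hypothesis Hno_crash : forall c, crash_at P 1 c -> c < w.
Hypothesis Hold_crashed : forall τ t0, Sd 1%nat τ t0 -> t0 < w ->
  exists c, crash_at P 1 c /\ t0 < c.
Hypothesis Hold_long_crashed : forall τ t0, Sd 1%nat τ t0 -> t0 < w -> cost τ = lmax ->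
  exists c, crash_at P 1 c /\ t0 < c < t0 + cost τ / s.
Hypothesis Hproc1 : forall p τ t0, Sd p τ t0 -> p = 1%nat.
Hypothesis Hcost : forall τ, In τ (tasks P) -> cost τ = lmin \/ cost τ = lmax.
Hypothesis Hlong_arrived : exists τ, In τ (tasks P) /\ cost τ = lmax /\ arr τ <= w.

Definition shorts_before i := forall τ t0, w <= t0 -> t0 < slot w i -> Sd 1%nat τ t0 ->
  exists i', (i' < i)%nat /\ t0 = slot w i' /\ cost τ = lmin.

Lemma exec_time_pos τ t0 : Sd 1%nat τ t0 -> 0 < cost τ / s.
Proof.
  intros H. destruct Hv as [Hv1 _]. destruct (Hv1 _ _ _ H) as [_ [_ [Hin _]]].
  apply Rdiv_lt_0_compat; [|lra]. destruct (Hcost τ Hin) as [->| ->]; lra.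
Qed.

(* The long task can never have been completed, so work conservation forces a start
   at the moment the previous short task ends. *)
Lemma start_at_slot i : shorts_before i -> exists τ, Sd 1%nat τ (slot w i).
Proof.
  intros HS. set (t := slot w i). assert (Hwt : w <= t) by apply slot_ge.
  destruct Hlong_arrived as [τm [Hin [Hc Ha]]].
  assert (Hpend : pending P Sd s τm t).
  { split; [auto|split; [lra|]]. intros [p [t0 [H1 [H2 H3]]]].
    assert (p = 1%nat) by (eapply Hproc1; eauto). subst p.
    destruct (Rlt_le_dec t0 w) as [Hl|Hl].
    - destruct (Hold_long_crashed _ _ H1 Hl Hc) as [c [Hc1 Hc2]]. apply (H3 c Hc1). lra.
    - destruct (Rlt_le_dec t0 t) as [Hl2|Hl2].
      + destruct (HS _ _ Hl Hl2 H1) as [i' [_ [_ Hc']]]. lra.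
      + pose proof (exec_time_pos _ _ H1). lra. }
  destruct (Hwc 1%nat t ltac:(lia) (Halive t Hwt) (ex_intro _ τm Hpend))
    as [τ' [t0 [H1 [H2 [H3 H4]]]]].
  exists τ'. replace t with t0; auto.
  destruct (Rlt_le_dec t0 w) as [Hl|Hl].
  - destruct (Hold_crashed _ _ H1 Hl) as [c [Hc1 Hc2]]. pose proof (Hno_crash c Hc1).
    exfalso. apply (H4 c Hc1). lra.
  - destruct (Rlt_le_dec t0 t) as [Hl2|Hl2]; [|lra].
    destruct (HS _ _ Hl Hl2 H1) as [i' [Hi' [Ht0 Hc']]].
    pose proof (slot_lt w i' i Hi'). rewrite Hc' in H3. subst t. lra.
Qed.

Lemma shorts_before_chain i : (i <= gamma)%nat -> (forall i', (i' < i)%nat -> ~ long_at Sd w i') ->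
  shorts_before i.
Proof.
  induction i as [|i IH]; intros Hi Hno.
  - intros τ t0 H1 H2. unfold slot in H2. simpl in H2. lra.
  - assert (HS : shorts_before i) by (apply IH; [lia|intros; apply Hno; lia]).
    destruct (start_at_slot i HS) as [τ' Hτ'].
    assert (Hc' : cost τ' = lmin).
    { destruct Hv as [Hv1 _]. destruct (Hv1 _ _ _ Hτ') as [_ [_ [Hin _]]].
      destruct (Hcost τ' Hin) as [H|H]; auto. exfalso. apply (Hno i); [lia|]. exists τ'; auto. }
    intros τ t0 H1 H2 H3. rewrite slot_succ in H2.
    destruct (Rlt_le_dec t0 (slot w i)) as [Hl|Hl].
    + destruct (HS _ _ H1 Hl H3) as [i' [Hi' Hr]]. exists i'. split; auto.
    + destruct Hv as [_ Hv2].
      destruct (Hv2 _ _ _ _ _ Hτ' H3 Hl) as [[E1 E2]|[E|[c [Hc [Hc1 Hc2]]]]].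
      * subst. exists i. auto.
      * rewrite Hc' in E. lra.
      * pose proof (Hno_crash c Hc). pose proof (slot_ge w i). lra.
Qed.

Lemma decide_spec : phase_spec (decide Sd w) Sd w.
Proof.
  unfold phase_spec. destruct (decide Sd w) as [j|] eqn:E.
  - destruct (decide_some _ _ _ E) as [Hj [[τm [Hcm Hm]] Hmin]].
    assert (HS : shorts_before j) by (apply shorts_before_chain; [lia|exact Hmin]).
    intros τ t0 H1 H2 H3.
    destruct (Rlt_le_dec t0 (slot w j)) as [Hl|Hl]; [left; exact (HS _ _ H1 Hl H3)|right].
    destruct Hv as [_ Hv2].
    destruct (Hv2 _ _ _ _ _ Hm H3 Hl) as [[E1 E2]|[E'|[c [Hc [Hc1 Hc2]]]]].
    + subst. auto.
    + exfalso. rewrite Hcm in E'. pose proof (long_at_slot_outlives w j Hj). lra.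
    + exfalso. pose proof (Hno_crash c Hc). pose proof (slot_ge w j). lra.
  - assert (HS : shorts_before gamma)
      by (apply shorts_before_chain; [lia|exact (decide_none _ _ E)]).
    intros τ t0 H1 H2 H3.
    destruct (Rlt_le_dec t0 (slot w gamma)) as [Hl|Hl].
    + left. exact (HS _ _ H1 Hl H3).
    + right. exact Hl.
Qed.

End OnePhase.

Lemma phase_spec_transfer d w Sd Sd' : phase_spec d Sd w ->
  (forall τ t0, t0 < w + phase_len d -> Sd' 1%nat τ t0 -> Sd 1%nat τ t0) -> phase_spec d Sd' w.
Proof.
  destruct d as [j|]; simpl; intros H Ht τ t0 H1 H2 H3; apply H; auto.
Qed.

Lemma long_task_crashed d Sd w τ t0 : phase_spec d Sd w ->
  (forall j, d = Some j -> (j < gamma)%nat) ->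
  Sd 1%nat τ t0 -> w <= t0 -> t0 < w + phase_len d -> cost τ = lmax ->
  w + phase_len d < t0 + lmax / s.
Proof.
  intros HW Hd H1 H2 H3 H4. destruct d as [j|]; simpl in *.
  - destruct (HW τ t0 H2 H3 H1) as [[i [_ [_ C]]]|[-> _]]; [lra|].
    exact (long_at_slot_outlives w j (Hd j eq_refl)).
  - destruct (HW τ t0 H2 H3 H1) as [[i [_ [_ C]]]|E]; [lra|].
    exact (long_after_slots_outlives w t0 E).
Qed.

Variable ALG : pattern -> schedule.
Hypothesis Honline : online_alg n s lmin lmax ALG.

Lemma alg_feasible hr : valid n s (adv hr) (ALG (adv hr)) /\
  work_conserving n s (adv hr) (ALG (adv hr)).
Proof. apply (proj1 Honline). apply adv_wf. Qed.

Lemma alg_start_inv hr p τ t0 : ALG (adv hr) p τ t0 ->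
  p = 1%nat /\ 0 <= t0 /\ In τ (adv_tasks hr) /\ alive (adv hr) 1 t0.
Proof.
  intros H. destruct (alg_feasible hr) as [[Hv1 _] _].
  destruct (Hv1 _ _ _ H) as [Hp [Ha [Hin [Har _]]]].
  simpl in Hin. pose proof (adv_tasks_arr hr τ Hin).
  assert (p = 1%nat).
  { destruct (Nat.eq_dec p 1); auto. exfalso. apply (idle_not_alive hr p t0); [lia|lra|auto]. }
  subst. repeat split; auto; lra.
Qed.

Lemma alg_start_window hr τ t0 : ALG (adv hr) 1%nat τ t0 -> phase_start hr <= t0 \/
  exists hr1 d hr2, hr = hr1 ++ d :: hr2 /\ phase_start hr2 <= t0 /\
    t0 < phase_start hr2 + phase_len d.
Proof.
  intros H. destruct (alg_start_inv hr _ _ _ H) as [_ [H0 [_ Ha]]].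
  destruct (Rlt_le_dec t0 (phase_start hr)) as [Hl|Hl]; auto. right.
  apply alive_before_in_window; auto.
Qed.

Definition faithful hr := forall hr1 d hr2, hr = hr1 ++ d :: hr2 ->
  phase_spec d (ALG (adv hr)) (phase_start hr2).
Definition commits_lt (hr : list (option nat)) :=
  forall hr1 j hr2, hr = hr1 ++ Some j :: hr2 -> (j < gamma)%nat.

Lemma alg_long_crashed hr τ t0 : faithful hr -> commits_lt hr -> ALG (adv hr) 1%nat τ t0 ->
  t0 < phase_start hr -> cost τ = lmax ->
  exists c, crash_at (adv hr) 1 c /\ t0 < c < t0 + cost τ / s.
Proof.
  intros HI HD H Hl Hc.
  destruct (alg_start_window hr τ t0 H) as [Hw|[hr1 [d [hr2 [E [H1 H2]]]]]]; [lra|].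
  exists (phase_start hr2 + phase_len d). split; [subst; apply crash_window_end|].
  rewrite Hc. split; auto.
  eapply long_task_crashed; [apply (HI hr1 d hr2 E)| |exact H|exact H1|exact H2|exact Hc].
  intros j Hj. subst d. eapply HD; eauto.
Qed.

Definition next_phase hr := decide (ALG (adv hr)) (phase_start hr).

Lemma next_phase_spec hr : faithful hr -> commits_lt hr ->
  phase_spec (next_phase hr) (ALG (adv hr)) (phase_start hr).
Proof.
  intros HI HD. destruct (alg_feasible hr) as [Hv Hwc]. apply decide_spec with (P := adv hr); auto.
  - intros t Ht. apply alive_after; auto.
  - intros c Hc. apply crash_before; auto.
  - intros τ t0 H Hl.
    destruct (alg_start_window hr τ t0 H) as [Hw|[hr1 [d [hr2 [E [H1 H2]]]]]]; [lra|].
    exists (phase_start hr2 + phase_len d). split; [subst; apply crash_window_end|lra].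
  - intros τ t0 H Hl Hc. apply alg_long_crashed; auto.
  - intros p τ t0 H. apply (alg_start_inv hr p τ t0 H).
  - intros τ Hin. apply (adv_tasks_cost hr τ Hin).
  - destruct (adv_tasks_long hr (nlong hr) (le_n _)) as [τ [Hin Ht]]. exists τ. simpl.
    split; auto. split; [apply (adv_tasks_odd hr τ (nlong hr)); auto|].
    apply (adv_tasks_arr hr τ Hin).
Qed.

(* The adversary plays each phase according to what the algorithm does on the
   current pattern; since the algorithm is online, it behaves the same on the
   extended pattern until the end of the phase just played. *)
Lemma alg_agree_next hr x : forall τ t0, t0 < phase_start hr + phase_len x ->
  ALG (adv (x :: hr)) 1%nat τ t0 -> ALG (adv hr) 1%nat τ t0.
Proof.
  intros τ t0 Ht H. destruct Honline as [_ Hna].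
  apply (Hna (adv hr) (adv (x :: hr)) t0 (adv_wf _) (adv_wf _)
    (adv_agree_prefix [] x hr t0 Ht) 1%nat τ t0 (Rle_refl _)). auto.
Qed.

Fixpoint history (k : nat) : list (option nat) :=
  match k with 0%nat => [] | S k' => next_phase (history k') :: history k' end.

Lemma history_faithful k : faithful (history k) /\ commits_lt (history k).
Proof.
  induction k as [|k [IHI IHD]].
  - split; intros hr1 d hr2 E; destruct hr1; discriminate.
  - simpl. split.
    + intros hr1 d hr2 E. destruct hr1 as [|y hr1]; simpl in E; inversion E; subst.
      * apply phase_spec_transfer with (Sd := ALG (adv (history k))).
        -- apply next_phase_spec; auto.
        -- intros τ t0 Ht H. apply (alg_agree_next (history k) (next_phase (history k))); auto.
      * apply phase_spec_transfer with (Sd := ALG (adv (history k))).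
        -- apply (IHI hr1 d hr2 H1).
        -- intros τ t0 Ht H. apply (alg_agree_next (history k) (next_phase (history k))); auto.
           rewrite H1. pose proof (phase_start_app hr1 (d :: hr2)).
           pose proof (phase_len_pos (next_phase (hr1 ++ d :: hr2))). simpl in *. lra.
    + intros hr1 j hr2 E. destruct hr1 as [|y hr1]; simpl in E; inversion E; subst.
      * exact (proj1 (decide_some _ _ _ H0)).
      * eapply IHD; eauto.
Qed.

(* The offline schedule uses the window of each phase to run the oldest pending
   short tasks ([j+1] of them after [Some j]) or the oldest long one, so that at
   every phase start exactly [gamma] short tasks and one long task are pending. *)
Definition opt_window (hr2 : list (option nat)) (d : option nat) (τ : task) (t : R) : Prop :=
  match d with
  | Some j => exists i, (i <= j)%nat /\ tid τ = (2 * (nshort hr2 + i))%nat /\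
    t = phase_start hr2 + INR i * lmin
  | None => tid τ = (2 * nlong hr2 + 1)%nat /\ t = phase_start hr2
  end.

Fixpoint opt_starts (hr : list (option nat)) (τ : task) (t : R) : Prop :=
  match hr with
  | [] => False
  | d :: hr' => opt_starts hr' τ t \/ opt_window hr' d τ t
  end.

Definition opt_sched (hr : list (option nat)) : schedule :=
  fun p τ t => p = 1%nat /\ In τ (adv_tasks hr) /\ opt_starts hr τ t.

Lemma opt_starts_window hr τ t : opt_starts hr τ t ->
  exists hr1 d hr2, hr = hr1 ++ d :: hr2 /\ opt_window hr2 d τ t.
Proof.
  induction hr as [|d hr IH]; simpl; [tauto|]. intros [H|H].
  - destruct (IH H) as [hr1 [d' [hr2 [E H']]]]. exists (d :: hr1), d', hr2. rewrite E. auto.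
  - exists [], d, hr. auto.
Qed.

Lemma opt_starts_intro hr1 d hr2 τ t : opt_window hr2 d τ t -> opt_starts (hr1 ++ d :: hr2) τ t.
Proof. induction hr1; simpl; auto. Qed.

Lemma opt_window_time hr2 d τ t : commits_lt (d :: hr2) -> opt_window hr2 d τ t ->
  phase_start hr2 <= t /\
  ((exists m, tid τ = (2*m)%nat /\ t + lmin <= phase_start hr2 + phase_len d) \/
   (exists m, tid τ = (2*m+1)%nat /\ t + lmax <= phase_start hr2 + phase_len d)).
Proof.
  intros HD. destruct d as [j|]; simpl.
  - intros [i [Hi [Ht ->]]]. pose proof (pos_INR i). split; [nra|].
    left. exists (nshort hr2 + i)%nat. split; auto.
    assert (INR i <= INR j) by (apply le_INR; auto). nra.
  - intros [Ht ->]. split; [lra|]. right. exists (nlong hr2). split; auto. lra.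
Qed.

Lemma commits_lt_app hr1 hr2 : commits_lt (hr1 ++ hr2) -> commits_lt hr2.
Proof. intros H a j b E. apply (H (hr1 ++ a) j b). rewrite E, app_assoc. auto. Qed.

Lemma opt_starts_time hr τ t : commits_lt hr -> opt_starts hr τ t ->
  exists hr1 d hr2, hr = hr1 ++ d :: hr2 /\ phase_start hr2 <= t /\
  ((exists m, tid τ = (2*m)%nat /\ t + lmin <= phase_start hr2 + phase_len d) \/
   (exists m, tid τ = (2*m+1)%nat /\ t + lmax <= phase_start hr2 + phase_len d)).
Proof.
  intros HD H. destruct (opt_starts_window hr τ t H) as [hr1 [d [hr2 [E HW]]]].
  exists hr1, d, hr2. split; auto. apply opt_window_time; auto.
  subst. apply (commits_lt_app hr1). auto.
Qed.

Lemma opt_starts_lt hr τ t : commits_lt hr -> opt_starts hr τ t -> t < phase_start hr.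
Proof.
  intros HD H. destruct (opt_starts_time hr τ t HD H) as [hr1 [d [hr2 [E [H1 H2]]]]].
  pose proof (phase_start_app hr1 (d :: hr2)) as HW. rewrite <- E in HW. simpl in HW.
  pose proof (phase_len_pos d).
  destruct H2 as [[m [_ H2]]|[m [_ H2]]]; lra.
Qed.

Lemma opt_starts_index hr τ t : opt_starts hr τ t ->
  (exists m, tid τ = (2*m)%nat /\ (m < nshort hr)%nat) \/
  (exists m, tid τ = (2*m+1)%nat /\ (m < nlong hr)%nat).
Proof.
  induction hr as [|d hr IH]; simpl; [tauto|]. intros [H|H].
  - destruct (IH H) as [[m [H1 H2]]|[m [H1 H2]]]; [left|right]; exists m; split; auto;
    destruct d; simpl; lia.
  - destruct d as [j|]; simpl in H.
    + destruct H as [i [Hi [Ht _]]]. left. exists (nshort hr + i)%nat. split; auto. lia.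
    + destruct H as [Ht _]. right. exists (nlong hr). split; auto.
Qed.

Lemma opt_window_index hr d τ t : opt_window hr d τ t ->
  (exists i, tid τ = (2 * (nshort hr + i))%nat) \/ tid τ = (2 * nlong hr + 1)%nat.
Proof.
  destruct d as [j|]; simpl.
  - intros [i [_ [H _]]]. left. eauto.
  - intros [H _]. right. exact H.
Qed.

Lemma opt_starts_unique hr τ τ' t t' : opt_starts hr τ t -> opt_starts hr τ' t' ->
  tid τ = tid τ' -> t = t'.
Proof.
  induction hr as [|d hr IH]; simpl; [tauto|]. intros [H|H] [H'|H'] E; auto.
  - destruct (opt_starts_index hr τ t H) as [[m [H1 H2]]|[m [H1 H2]]];
      destruct (opt_window_index hr d τ' t' H') as [[i H3]|H3]; lia.
  - destruct (opt_starts_index hr τ' t' H') as [[m [H1 H2]]|[m [H1 H2]]];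
      destruct (opt_window_index hr d τ t H) as [[i H3]|H3]; lia.
  - destruct d as [j|]; simpl in H, H'.
    + destruct H as [i [_ [H1 ->]]]. destruct H' as [i' [_ [H1' ->]]].
      assert (i = i') by lia. subst. auto.
    + destruct H as [_ ->]. destruct H' as [_ ->]. auto.
Qed.

Lemma opt_starts_sep hr τ τ' t t' : commits_lt hr ->
  opt_starts hr τ t -> opt_starts hr τ' t' -> t <= t' ->
  (tid τ = tid τ' /\ t = t') \/
  (exists m, tid τ = (2*m)%nat /\ t + lmin <= t') \/
  (exists m, tid τ = (2*m+1)%nat /\ t + lmax <= t').
Proof.
  induction hr as [|d hr IH]; simpl; [tauto|]. intros HD [H|H] [H'|H'] Hle.
  - apply IH; auto. apply (commits_lt_app [d]). auto.
  - assert (HD' : commits_lt hr) by (apply (commits_lt_app [d]); auto).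
    destruct (opt_starts_time hr τ t HD' H) as [hr1 [d' [hr2 [E [H1 H2]]]]].
    assert (phase_start (d' :: hr2) <= phase_start hr) by (rewrite E; apply phase_start_app).
    simpl in H0.
    assert (phase_start hr <= t').
    { destruct d as [j|]; simpl in H'.
      - destruct H' as [i [_ [_ ->]]]. pose proof (pos_INR i). nra.
      - destruct H' as [_ ->]. lra. }
    right. destruct H2 as [[m [Hm H2]]|[m [Hm H2]]]; [left|right]; exists m; split; auto; lra.
  - exfalso. assert (HD' : commits_lt hr) by (apply (commits_lt_app [d]); auto).
    pose proof (opt_starts_lt hr τ' t' HD' H').
    assert (phase_start hr <= t).
    { destruct d as [j|]; simpl in H.
      - destruct H as [i [_ [_ ->]]]. pose proof (pos_INR i). nra.
      - destruct H as [_ ->]. lra. }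
    lra.
  - destruct d as [j|]; simpl in H, H'.
    + destruct H as [i [_ [H1 ->]]]. destruct H' as [i' [_ [H1' ->]]].
      destruct (Nat.lt_trichotomy i i') as [Hl|[Hl|Hl]].
      * right. left. exists (nshort hr + i)%nat. split; auto.
        assert (INR i + 1 <= INR i') by (rewrite <- S_INR; apply le_INR; lia). nra.
      * subst. left. split; [lia|auto].
      * exfalso. assert (INR i' + 1 <= INR i) by (rewrite <- S_INR; apply le_INR; lia). nra.
    + destruct H as [H1 ->]. destruct H' as [H1' ->]. left. split; [lia|auto].
Qed.

Lemma opt_window_arr hr hr1 d hr2 τ t : hr = hr1 ++ d :: hr2 -> commits_lt hr ->
  In τ (adv_tasks hr) -> opt_window hr2 d τ t -> arr τ <= phase_start hr2.
Proof.
  intros E HD Hin HW. destruct d as [j|]; simpl in HW.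
  - destruct HW as [i [Hi [Ht _]]]. assert (Hj : (j < gamma)%nat) by (eapply HD; eauto).
    destruct (adv_tasks_short hr2 (nshort hr2 + i) ltac:(lia)) as [τ' [Hin' Ht']].
    assert (τ = τ').
    { apply (adv_tasks_tid_inj hr); auto; [|lia]. subst hr.
      replace (hr1 ++ Some j :: hr2) with ((hr1 ++ [Some j]) ++ hr2)
        by (rewrite <- app_assoc; auto).
      apply adv_tasks_app. auto. }
    subst. apply (adv_tasks_arr hr2). auto.
  - destruct HW as [Ht _].
    destruct (adv_tasks_long hr2 (nlong hr2) (le_n _)) as [τ' [Hin' Ht']].
    assert (τ = τ').
    { apply (adv_tasks_tid_inj hr); auto; [|lia]. subst hr.
      replace (hr1 ++ None :: hr2) with ((hr1 ++ [None]) ++ hr2) by (rewrite <- app_assoc; auto).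
      apply adv_tasks_app. auto. }
    subst. apply (adv_tasks_arr hr2). auto.
Qed.

Lemma opt_valid hr : commits_lt hr -> valid n 1 (adv hr) (opt_sched hr).
Proof.
  intros HD. split.
  - intros p τ t [Hp [Hin HO]]. subst p. split; [lia|].
    destruct (opt_starts_window hr τ t HO) as [hr1 [d [hr2 [E HW]]]].
    assert (HD2 : commits_lt (d :: hr2)) by (subst; apply (commits_lt_app hr1); auto).
    destruct (opt_window_time hr2 d τ t HD2 HW) as [H1 H2].
    assert (Ht : t < phase_start hr2 + phase_len d)
      by (destruct H2 as [[m [_ H2]]|[m [_ H2]]]; lra).
    split; [subst; apply alive_in_window; auto|].
    split; [exact Hin|]. split; [pose proof (opt_window_arr hr hr1 d hr2 τ t E HD Hin HW); lra|].
    intros [p [t0 [[Hp [_ H0]] [H3 _]]]]. subst p.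
    pose proof (opt_starts_unique hr τ τ t0 t H0 HO eq_refl). subst t0.
    rewrite Rdiv_1_r in H3. destruct (adv_tasks_cost hr τ Hin); lra.
  - intros p τ t τ' t' [Hp [Hin HO]] [Hp' [Hin' HO']] Hle. subst.
    destruct (opt_starts_sep hr τ τ' t t' HD HO HO' Hle) as [[E1 E2]|[[m [Hm H]]|[m [Hm H]]]].
    + left. split; auto. apply (adv_tasks_tid_inj hr); auto.
    + right. left. rewrite Rdiv_1_r. rewrite (proj1 (adv_tasks_even hr τ m Hin Hm)). auto.
    + right. left. rewrite Rdiv_1_r. rewrite (adv_tasks_odd hr τ m Hin Hm). auto.
Qed.

Lemma opt_cover_short hr m : (m < nshort hr)%nat ->
  exists hr1 j hr2 i, hr = hr1 ++ Some j :: hr2 /\ (i <= j)%nat /\ m = (nshort hr2 + i)%nat.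
Proof.
  induction hr as [|d hr IH]; simpl; intros Hm; [lia|].
  destruct d as [j|].
  - destruct (Nat.lt_ge_cases m (nshort hr)) as [Hl|Hl].
    + destruct (IH Hl) as [hr1 [j' [hr2 [i [E [H1 H2]]]]]]. exists (Some j :: hr1), j', hr2, i.
      rewrite E. auto.
    + exists [], j, hr, (m - nshort hr)%nat. simpl. repeat split; lia.
  - destruct (IH Hm) as [hr1 [j' [hr2 [i [E [H1 H2]]]]]]. exists (None :: hr1), j', hr2, i.
    rewrite E. auto.
Qed.

Lemma opt_cover_long hr m : (m < nlong hr)%nat ->
  exists hr1 hr2, hr = hr1 ++ None :: hr2 /\ m = nlong hr2.
Proof.
  induction hr as [|d hr IH]; simpl; intros Hm; [lia|].
  destruct d as [j|].
  - destruct (IH Hm) as [hr1 [hr2 [E H]]]. exists (Some j :: hr1), hr2. rewrite E. auto.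
  - destruct (Nat.lt_ge_cases m (nlong hr)) as [Hl|Hl].
    + destruct (IH Hl) as [hr1 [hr2 [E H]]]. exists (None :: hr1), hr2. rewrite E. auto.
    + exists [], hr. simpl. split; auto. lia.
Qed.

Lemma opt_completed hr hr1 d hr2 τ t : hr = hr1 ++ d :: hr2 -> commits_lt hr ->
  In τ (adv_tasks hr) -> opt_window hr2 d τ t ->
  completed (adv hr) (opt_sched hr) 1 τ (phase_start hr).
Proof.
  intros E HD Hin HW. exists 1%nat, t.
  split; [split; [auto|split; auto]; subst; apply opt_starts_intro; auto|].
  assert (HD2 : commits_lt (d :: hr2)) by (subst; apply (commits_lt_app hr1); auto).
  destruct (opt_window_time hr2 d τ t HD2 HW) as [H1 H2].
  rewrite Rdiv_1_r.
  assert (Hend : t + cost τ <= phase_start hr2 + phase_len d).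
  { destruct H2 as [[m [Hm H2]]|[m [Hm H2]]].
    - rewrite (proj1 (adv_tasks_even hr τ m Hin Hm)). exact H2.
    - rewrite (adv_tasks_odd hr τ m Hin Hm). exact H2. }
  assert (phase_start (d :: hr2) <= phase_start hr) by (rewrite E; apply phase_start_app).
  simpl in H. split; [lra|].
  intros c Hc [Hc1 Hc2]. rewrite E in Hc.
  destruct (crash_cases_time hr1 d hr2 c Hc) as [H3|[H3|H3]]; simpl in *; lra.
Qed.

Lemma opt_pend_num_le hr : commits_lt hr ->
  pend_num (adv hr) (opt_sched hr) 1 (phase_start hr) <= INR gamma + 1.
Proof.
  intros HD. rewrite pend_num_adv.
  set (M := map (fun m => (2*m)%nat) (seq (nshort hr) gamma) ++ [(2 * nlong hr + 1)%nat]).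
  assert (HM : INR (length M) = INR gamma + 1).
  { unfold M. rewrite length_app, length_map, length_seq. simpl. rewrite plus_INR. simpl. lra. }
  rewrite <- HM. apply (count_where_cover M (fun m τ => tid τ = m)).
  - apply (NoDup_map_inv tid). apply adv_tasks_NoDup.
  - intros τ Hin [_ [_ Hnc]]. exists (tid τ). split; auto.
    destruct (adv_tasks_kind hr τ Hin) as [[m [H1 [H2 H3]]]|[m [H1 [H2 H3]]]].
    + destruct (Nat.lt_ge_cases m (nshort hr)) as [Hl|Hl].
      * exfalso. apply Hnc. destruct (opt_cover_short hr m Hl) as [hr1 [j [hr2 [i [E [Hi Hm]]]]]].
        apply (opt_completed hr hr1 (Some j) hr2 τ (phase_start hr2 + INR i * lmin) E HD Hin).
        simpl. exists i. split; auto. split; auto. lia.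
      * unfold M. apply in_or_app. left. rewrite H1. apply in_map_iff. exists m.
        split; auto. apply in_seq. lia.
    + destruct (Nat.lt_ge_cases m (nlong hr)) as [Hl|Hl].
      * exfalso. apply Hnc. destruct (opt_cover_long hr m Hl) as [hr1 [hr2 [E Hm]]].
        apply (opt_completed hr hr1 None hr2 τ (phase_start hr2) E HD Hin).
        simpl. split; auto. lia.
      * unfold M. apply in_or_app. right. left. rewrite H1. f_equal. f_equal. lia.
  - intros k x y Hx Hy Ex Ey. apply (adv_tasks_tid_inj hr); auto. congruence.
Qed.

Lemma count_long hr : count_where (adv_tasks hr) (fun τ => cost τ = lmax) = INR (S (nlong hr)).
Proof.
  induction hr as [|d hr IH]; simpl adv_tasks.
  - rewrite count_where_app. rewrite count_where_none.
    + rewrite count_where_all; [simpl; lra|]. intros t [<-|[]]. reflexivity.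
    + intros t Ht. apply in_map_iff in Ht. destruct Ht as [m [<- _]]. simpl. lra.
  - rewrite count_where_app, IH. destruct d as [j|]; cbn [injected nlong].
    + rewrite count_where_none; [lra|]. intros t Ht. apply in_map_iff in Ht.
      destruct Ht as [m [<- _]]. simpl. lra.
    + rewrite count_where_all; [simpl length; rewrite (S_INR (S (nlong hr))); simpl; lra|].
      intros t [<-|[]]. reflexivity.
Qed.

Lemma alg_start_unique hr x y t : ALG (adv hr) 1%nat x t -> ALG (adv hr) 1%nat y t -> x = y.
Proof.
  intros H1 H2. destruct (alg_feasible hr) as [[Hv1 Hv2] _].
  destruct (Hv2 _ _ _ _ _ H1 H2 (Rle_refl t)) as [[E _]|[E|[c [_ [Hc1 Hc2]]]]]; auto; [|lra].
  destruct (Hv1 _ _ _ H1) as [_ [_ [Hin _]]]. simpl in Hin.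
  exfalso. assert (0 < cost x / s).
  { apply Rdiv_lt_0_compat; [|lra]. destruct (adv_tasks_cost hr x Hin) as [->| ->]; lra. }
  lra.
Qed.

Lemma alg_pend_num_long hr : faithful hr -> commits_lt hr ->
  INR (S (nlong hr)) <= pend_num (adv hr) (ALG (adv hr)) s (phase_start hr).
Proof.
  intros HI HD. rewrite <- count_long, pend_num_adv.
  apply count_where_mono. intros τ Hin Hc. split; [exact Hin|].
  split; [apply (adv_tasks_arr hr τ Hin)|].
  intros [p [t0 [H1 [H2 H3]]]].
  destruct (alg_start_inv hr p τ t0 H1) as [-> _].
  assert (0 < cost τ / s) by (rewrite Hc; apply Rdiv_lt_0_compat; lra).
  destruct (alg_long_crashed hr τ t0 HI HD H1 ltac:(lra) Hc) as [c [Hc1 Hc2]].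
  apply (H3 c Hc1). lra.
Qed.

Fixpoint tasks_since (hr1 hr0 : list (option nat)) : list task :=
  match hr1 with [] => [] | d :: hr1' => tasks_since hr1' hr0 ++ injected d (hr1' ++ hr0) end.

Lemma adv_tasks_app_eq hr1 hr0 : adv_tasks (hr1 ++ hr0) = adv_tasks hr0 ++ tasks_since hr1 hr0.
Proof.
  induction hr1 as [|d hr1 IH]; simpl; [rewrite app_nil_r; auto|]. rewrite IH, app_assoc. auto.
Qed.

Definition all_commits (hr : list (option nat)) := forall d, In d hr -> exists j, d = Some j.

Fixpoint sum_commits (hr : list (option nat)) : nat :=
  match hr with
  | [] => 0%nat
  | Some j :: hr' => (j + sum_commits hr')%nat
  | None :: hr' => sum_commits hr'
  end.

Lemma tasks_since_length hr1 hr0 : all_commits hr1 ->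
  length (tasks_since hr1 hr0) = (sum_commits hr1 + length hr1)%nat.
Proof.
  induction hr1 as [|d hr1 IH]; simpl; intros H; auto.
  destruct (H d (or_introl eq_refl)) as [j ->]. rewrite length_app, IH.
  - cbn [injected]. rewrite length_map, length_seq. simpl. lia.
  - intros x Hx. apply H. simpl. auto.
Qed.

Lemma tasks_since_short hr1 hr0 τ : all_commits hr1 -> In τ (tasks_since hr1 hr0) ->
  phase_start hr0 < arr τ /\ cost τ = lmin.
Proof.
  induction hr1 as [|d hr1 IH]; simpl; intros H Hin; [tauto|].
  apply in_app_or in Hin. destruct Hin as [Hin|Hin].
  - apply IH; auto. intros x Hx. apply H. simpl. auto.
  - destruct (H d (or_introl eq_refl)) as [j ->]. cbn [injected] in Hin.
    apply in_map_iff in Hin. destruct Hin as [m [<- _]]. simpl.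
    pose proof (phase_start_app hr1 hr0). pose proof (phase_len_pos (Some j)). simpl in *.
    split; lra.
Qed.

Fixpoint short_slots (hr1 hr0 : list (option nat)) : list R :=
  match hr1 with
  | [] => []
  | Some j :: hr1' =>
      map (fun i => slot (phase_start (hr1' ++ hr0)) i) (seq 0 j) ++ short_slots hr1' hr0
  | None :: hr1' => short_slots hr1' hr0
  end.

Lemma short_slots_length hr1 hr0 : length (short_slots hr1 hr0) = sum_commits hr1.
Proof.
  induction hr1 as [|d hr1 IH]; simpl; auto. destruct d as [j|]; auto.
  rewrite length_app, length_map, length_seq, IH. auto.
Qed.

Lemma short_slots_In a j b hr0 i : (i < j)%nat ->
  In (slot (phase_start (b ++ hr0)) i) (short_slots (a ++ Some j :: b) hr0).
Proof.
  intros Hi. induction a as [|d a IH]; simpl.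
  - apply in_or_app. left. apply in_map_iff. exists i. split; auto. apply in_seq. lia.
  - destruct d as [j'|]; auto. apply in_or_app. right. auto.
Qed.

Lemma alg_completed_since_at_slot hr1 hr0 τ : faithful (hr1 ++ hr0) -> all_commits hr1 ->
  In τ (tasks_since hr1 hr0) ->
  completed (adv (hr1 ++ hr0)) (ALG (adv (hr1 ++ hr0))) s τ (phase_start (hr1 ++ hr0)) ->
  exists t0, In t0 (short_slots hr1 hr0) /\ ALG (adv (hr1 ++ hr0)) 1%nat τ t0.
Proof.
  intros HI HA Hin [p [t0 [H1 [H2 _]]]]. set (hr := hr1 ++ hr0) in *.
  destruct (tasks_since_short hr1 hr0 τ HA Hin) as [Harr Hcost].
  destruct (alg_start_inv hr p τ t0 H1) as [-> _].
  assert (Ht0 : t0 < phase_start hr) by (rewrite Hcost in H2; pose proof short_time_pos; lra).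
  destruct (alg_feasible hr) as [[Hv1 _] _]. destruct (Hv1 _ _ _ H1) as [_ [_ [_ [Har _]]]].
  destruct (alg_start_window hr τ t0 H1) as [Hw|[a [d [b [E [Hb1 Hb2]]]]]]; [lra|].
  unfold hr in E. apply app_eq_app in E. destruct E as [l [[E1 E2]|[E1 E2]]].
  - destruct l as [|x l].
    + simpl in E2. subst hr0. simpl in Harr. lra.
    + simpl in E2. inversion E2; subst x b.
      destruct (HA d) as [j ->]; [rewrite E1; apply in_or_app; right; simpl; auto|].
      assert (Ea : hr = a ++ Some j :: l ++ hr0) by (unfold hr; rewrite E1, <- app_assoc; auto).
      destruct (HI a (Some j) (l ++ hr0) Ea τ t0 Hb1 Hb2 H1) as [[i [Hi [Ht _]]]|[_ Hc']]; [|lra].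
      exists t0. split; [|exact H1]. rewrite Ht, E1. apply short_slots_In; auto.
  - exfalso.
    assert (phase_start (d :: b) <= phase_start hr0) by (rewrite E2; apply phase_start_app).
    simpl in *. lra.
Qed.

(* During a run of committed phases the algorithm completes at most one task per
   short slot, while each phase injects one more short task than it has slots. *)
Lemma alg_pend_num_commits hr1 hr0 : faithful (hr1 ++ hr0) -> all_commits hr1 ->
  INR (length hr1) <=
    pend_num (adv (hr1 ++ hr0)) (ALG (adv (hr1 ++ hr0))) s (phase_start (hr1 ++ hr0)).
Proof.
  intros HI HA. set (hr := hr1 ++ hr0). set (T := phase_start hr).
  set (Pend := fun τ => pending (adv hr) (ALG (adv hr)) s τ T).
  rewrite pend_num_adv. fold Pend. unfold hr at 1. rewrite adv_tasks_app_eq, count_where_app.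
  pose proof (count_where_ge0 (adv_tasks hr0) Pend).
  pose proof (count_where_compl (tasks_since hr1 hr0) Pend) as Hc.
  rewrite tasks_since_length, plus_INR in Hc by exact HA.
  assert (Hdone : count_where (tasks_since hr1 hr0) (fun τ => ~ Pend τ) <= INR (sum_commits hr1)).
  { rewrite <- (short_slots_length hr1 hr0).
    apply (count_where_cover (short_slots hr1 hr0) (fun t τ => ALG (adv hr) 1%nat τ t)).
    - assert (ND : NoDup (adv_tasks hr)) by (apply (NoDup_map_inv tid), adv_tasks_NoDup).
      unfold hr in ND. rewrite adv_tasks_app_eq in ND. exact (NoDup_app_remove_l _ _ ND).
    - intros τ Hin Hnp. apply alg_completed_since_at_slot; auto.
      assert (Hin2 : In τ (adv_tasks hr))
        by (unfold hr; rewrite adv_tasks_app_eq; apply in_or_app; auto).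
      apply NNPP. intros Hnc. apply Hnp. split; [exact Hin2|].
      split; [apply (adv_tasks_arr hr τ Hin2)|auto].
    - intros t x y _ _ H1 H2. apply (alg_start_unique hr x y t); auto. }
  lra.
Qed.

Fixpoint trailing_commits (hr : list (option nat)) : nat :=
  match hr with Some _ :: hr' => S (trailing_commits hr') | _ => 0%nat end.

Lemma trailing_commits_split hr :
  exists hr1 hr0, hr = hr1 ++ hr0 /\ all_commits hr1 /\ length hr1 = trailing_commits hr.
Proof.
  induction hr as [|d hr IH].
  - exists [], []. split; auto. split; auto. intros x [].
  - destruct d as [j|].
    + destruct IH as [hr1 [hr0 [E [HA HL]]]]. exists (Some j :: hr1), hr0. simpl. subst hr.
      split; auto. split; [|lia]. intros x [<-|Hx]; eauto.
    + exists [], (None :: hr). simpl. split; auto. split; auto. intros x [].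
Qed.

Lemma length_le_runs X hr : (forall hr1 hr2, hr = hr1 ++ hr2 -> (trailing_commits hr2 < X)%nat) ->
  (length hr <= nlong hr * X + trailing_commits hr)%nat.
Proof.
  induction hr as [|d hr IH]; intros Hrun; [simpl; lia|].
  assert (Hhr := Hrun [d] hr eq_refl).
  specialize (IH (fun hr1 hr2 E => Hrun (d :: hr1) hr2 (f_equal (cons d) E))).
  destruct d; cbn [length nlong trailing_commits]; nia.
Qed.

Lemma history_length K : length (history K) = K.
Proof. induction K as [|K IH]; simpl; auto. Qed.

Lemma history_suffix K hr1 hr2 : history K = hr1 ++ hr2 -> hr2 = history (K - length hr1).
Proof.
  revert K. induction hr1 as [|d hr1 IH]; intros K E.
  - simpl. rewrite Nat.sub_0_r. auto.
  - destruct K as [|K]; [discriminate|]. simpl in E. inversion E as [[Hd E']].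
    rewrite (IH K E'). reflexivity.
Qed.

Lemma history_growth X : (1 <= X)%nat ->
  exists K, (X <= S (nlong (history K)))%nat \/ (X <= trailing_commits (history K))%nat.
Proof.
  intros HX.
  destruct (classic (exists hr1 hr2,
    history (X * X) = hr1 ++ hr2 /\ (X <= trailing_commits hr2)%nat)) as [[hr1 [hr2 [E Hrun]]]|Hno].
  - exists (X * X - length hr1)%nat. right. rewrite <- (history_suffix _ _ _ E). exact Hrun.
  - exists (X * X)%nat. left.
    assert (Hlen := length_le_runs X (history (X * X))). rewrite history_length in Hlen.
    assert (Hrun : forall hr1 hr2, history (X * X) = hr1 ++ hr2 -> (trailing_commits hr2 < X)%nat).
    { intros hr1 hr2 E. apply Nat.nle_gt. intros Hge. apply Hno. eauto. }
    specialize (Hlen Hrun). specialize (Hrun [] _ eq_refl). cbn in Hrun. nia.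
Qed.

Lemma alg_pend_num_large X : (1 <= X)%nat -> exists hr, commits_lt hr /\
  INR X <= pend_num (adv hr) (ALG (adv hr)) s (phase_start hr).
Proof.
  intros HX. destruct (history_growth X HX) as [K HK]. destruct (history_faithful K) as [HI HD].
  exists (history K). split; [exact HD|]. destruct HK as [HK|HK].
  - eapply Rle_trans; [apply le_INR; exact HK|]. apply alg_pend_num_long; auto.
  - destruct (trailing_commits_split (history K)) as [hr1 [hr0 [E [HA HL]]]].
    eapply Rle_trans; [apply le_INR; exact HK|]. rewrite <- HL. rewrite E in HI |- *.
    apply alg_pend_num_commits; auto.
Qed.

Lemma alg_pend_num_unbounded B : exists hr, commits_lt hr /\
  B < pend_num (adv hr) (ALG (adv hr)) s (phase_start hr).
Proof.
  destruct (INR_unbounded B) as [X0 HX0].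
  destruct (alg_pend_num_large (S X0) ltac:(lia)) as [hr [HD Hbig]].
  exists hr. split; [exact HD|]. rewrite S_INR in Hbig. lra.
Qed.

Theorem not_competitive : ~ competitive n s lmin lmax ALG.
Proof.
  apply (not_competitive_of_unbounded _ _ _ _ _ (INR gamma + 1)); [split; lra|]. intros B.
  destruct (alg_pend_num_unbounded B) as [hr [HD Hbig]].
  exists (adv hr), (opt_sched hr), (phase_start hr).
  split; [apply adv_wf|]. split; [apply opt_valid, HD|].
  split; [apply opt_pend_num_le, HD|exact Hbig].
Qed.

End Adversary.

Lemma Rlt_div_swap a b c : 0 < b -> 0 < c -> c < a / b -> b < a / c.
Proof.
  intros Hb Hc H. apply (Rmult_lt_compat_r b) in H; [|exact Hb].
  replace (a / b * b) with a in H by (field; lra).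
  apply (Rmult_lt_reg_r c); [exact Hc|]. replace (a / c * c) with a by (field; lra). lra.
Qed.

Theorem theorem2 (lmin lmax s : R) (gamma : nat) :
  0 < lmin -> lmin <= lmax -> 1 <= s ->
  (INR gamma * lmin + lmax) / s <= (INR gamma + 1) * lmin ->
  (forall g : nat, (INR g * lmin + lmax) / s <= (INR g + 1) * lmin ->
     (gamma <= g)%nat) ->
  s < lmax / lmin ->
  s < (INR gamma * lmin + lmax) / lmax ->
  forall n : nat, (1 <= n)%nat ->
  forall ALG : pattern -> schedule,
    online_alg n s lmin lmax ALG -> ~ competitive n s lmin lmax ALG.
Proof.
  intros Hl Hle Hs _ Hmin Ha Hb n Hn ALG Halg.
  assert (Hlt : lmin < lmax).
  { assert (H1 : 1 < lmax / lmin) by lra.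
    pose proof (Rlt_div_swap lmax lmin 1 Hl Rlt_0_1 H1) as H. rewrite Rdiv_1_r in H. exact H. }
  apply (not_competitive lmin lmax s gamma n); auto.
  - intros j Hj. apply Rnot_le_lt. intros H. specialize (Hmin j H). lia.
  - apply Rlt_div_swap; [lra|lra|exact Hb].
Qed.
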